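(* Let $n\geq 1$ and let $r,k\in\mathbf{Z}$ with $r\geq 1$. Then \begin{align*} \tilde{A}_{n}^{(r,k)}(x)&=x\tilde{A}_{n-1}^{(r,k)}(x-1)+r\sum_{a=0}^{n-1}\frac{(-1)^{a+1}a!}{a+2}\binom{n-1}{a}\tilde{A}_{n-1-a}^{(r+1,k)}(x)\\ &\quad +\frac{1}{n}\left(\tilde{A}_{n}^{(r+1,k-1)}(x)-\tilde{A}_{n}^{(r+1,k)}(x)\right). \end{align*}
   Context: For $k\in\mathbf{Z}$, $Lif_{k}(x)=\sum_{m=0}^{\infty}\frac{x^{m}}{m!(m+1)^{k}}$. For integers $r\geq 0$, $k\in\mathbf{Z}$, the polynomials $\tilde{A}_{n}^{(r,k)}(x)$ are defined by \[\left(\frac{t}{(1+t)\log(1+t)}\right)^{r}Lif_{k}\left(-\log(1+t)\right)(1+t)^{x}=\sum_{n=0}^{\infty}\tilde{A}_{n}^{(r,k)}(x)\frac{t^{n}}{n!}.\] *)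

From HB Require Import structures.
From mathcomp Require Import all_boot all_order all_algebra.
Set Implicit Arguments. Unset Strict Implicit. Unset Printing Implicit Defensive.
Import Order.TTheory GRing.Theory Num.Theory.
Local Open Scope ring_scope.

Section FPS.
Variable R : realFieldType.

Definition fps := nat -> R.

Definition fps_one : fps := fun n => if n == 0%N then 1 else 0.
Definition fps_t : fps := fun n => if n == 1%N then 1 else 0.

Definition fps_add (a b : fps) : fps := fun n => a n + b n.
Definition fps_opp (a : fps) : fps := fun n => - a n.

Definition fps_mul (a b : fps) : fps :=
  fun n => \sum_(i < n.+1) a i * b (n - i)%N.

Fixpoint fps_pow (a : fps) (m : nat) : fps :=
  match m with 0%N => fps_one | m'.+1 => fps_mul a (fps_pow a m') end.

(* composition f(g(t)), meaningful when g(0) = 0: since g^m has valuation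
   >= m, the n-th coefficient only involves m <= n *)
Definition fps_comp (f g : fps) : fps :=
  fun n => \sum_(m < n.+1) f m * fps_pow g m n.

(* multiplicative inverse of a series with constant term 1:
   1/a = 1/(1+u) = sum_m (-1)^m u^m with u = a - 1 *)
Definition fps_inv1 (a : fps) : fps :=
  fps_comp (fun m => (-1) ^+ m) (fps_add a (fps_opp fps_one)).

(* log(1+t) *)
Definition log1p_ser : fps :=
  fun n => if n == 0%N then 0 else (-1) ^+ n.+1 / n%:R.

(* log(1+t)/t *)
Definition log1p_div_t : fps := fun n => (-1) ^+ n / (n.+1)%:R.

(* t / ((1+t) log(1+t)) = 1 / ((1+t) * (log(1+t)/t)) *)
Definition h_ser : fps :=
  fps_inv1 (fps_mul (fps_add fps_one fps_t) log1p_div_t).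

(* Lif_k(y) = sum_m y^m / (m! (m+1)^k), k an integer *)
Definition Lif_ser (k : int) : fps :=
  fun m => (m`!%:R * ((m.+1)%:R ^ k))^-1.

(* (1+t)^x = sum_n binom(x,n) t^n *)
Definition binom_ser (x : R) : fps :=
  fun n => (\prod_(i < n) (x - i%:R)) / n`!%:R.

(* generating function
   (t/((1+t)log(1+t)))^r * Lif_k(-log(1+t)) * (1+t)^x *)
Definition Atilde_gen (r : nat) (k : int) (x : R) : fps :=
  fps_mul (fps_pow h_ser r)
          (fps_mul (fps_comp (Lif_ser k) (fps_opp log1p_ser)) (binom_ser x)).

Definition Atilde (n r : nat) (k : int) (x : R) : R :=
  n`!%:R * Atilde_gen r k x n.

End FPS.

(* The generating function G_r^k(x) = h^r * L_k * B_x, with h = t/((1+t)log(1+t)),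
   L_k = Lif_k(-log(1+t)) and B_x = (1+t)^x, satisfies three first-order
   differential relations:
     h' = h^2 q        where q = -(1/h)' = sum_a (-1)^(a+1)/(a+2) t^a,
     t L_k' = h (L_(k-1) - L_k)   since y Lif_k'(y) = Lif_(k-1)(y) - Lif_k(y),
     B_x' = x B_(x-1).
   Differentiating G_r^k(x) by the product rule therefore gives
     t G_r^k(x)' = x t G_r^k(x-1) + r t q G_(r+1)^k(x) + G_(r+1)^(k-1)(x) - G_(r+1)^k(x),
   and comparing the coefficients of t^n gives the recurrence.  All series are
   handled through their truncations modulo t^M, which are polynomials, so that
   the formal derivative of {poly R} can be used. *)
From HB Require Import structures.
From mathcomp Require Import all_boot all_order all_algebra.
From mathcomp Require Import ring.
Import Order.TTheory GRing.Theory Num.Theory.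
Unset Printing Implicit Defensive.
Local Open Scope ring_scope.

Section EqUpto.
Context {R : nzRingType}.
Implicit Types p q : {poly R}.

Definition eq_upto (M : nat) p q := forall i, (i < M)%N -> p`_i = q`_i.

Lemma eq_upto_refl M p : eq_upto M p p. Proof. by []. Qed.

Lemma eq_upto_eq M p q : p = q -> eq_upto M p q. Proof. by move=> ->. Qed.

Lemma eq_upto_sym M p q : eq_upto M p q -> eq_upto M q p.
Proof. by move=> h i hi; rewrite h. Qed.

Lemma eq_upto_trans M p q s : eq_upto M p q -> eq_upto M q s -> eq_upto M p s.
Proof. by move=> h1 h2 i hi; rewrite h1 ?h2. Qed.

Lemma eq_upto_le N M p q : (N <= M)%N -> eq_upto M p q -> eq_upto N p q.
Proof. by move=> hNM h i hi; apply: h; apply: leq_trans hNM. Qed.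

Lemma eq_uptoD M p1 p2 q1 q2 :
  eq_upto M p1 p2 -> eq_upto M q1 q2 -> eq_upto M (p1 + q1) (p2 + q2).
Proof. by move=> h1 h2 i hi; rewrite !coefD h1 ?h2. Qed.

Lemma eq_uptoN M p1 p2 : eq_upto M p1 p2 -> eq_upto M (- p1) (- p2).
Proof. by move=> h i hi; rewrite !coefN h. Qed.

Lemma eq_uptoB M p1 p2 q1 q2 :
  eq_upto M p1 p2 -> eq_upto M q1 q2 -> eq_upto M (p1 - q1) (p2 - q2).
Proof. by move=> h1 h2; apply: eq_uptoD => //; apply: eq_uptoN. Qed.

Lemma eq_uptoZ M c p1 p2 : eq_upto M p1 p2 -> eq_upto M (c *: p1) (c *: p2).
Proof. by move=> h i hi; rewrite !coefZ h. Qed.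

Lemma eq_uptoMn M m p1 p2 : eq_upto M p1 p2 -> eq_upto M (p1 *+ m) (p2 *+ m).
Proof. by move=> h i hi; rewrite !coefMn h. Qed.

Lemma eq_uptoM M p1 p2 q1 q2 :
  eq_upto M p1 p2 -> eq_upto M q1 q2 -> eq_upto M (p1 * q1) (p2 * q2).
Proof.
move=> h1 h2 i hi; rewrite !coefM; apply: eq_bigr => j _.
have hj : (j < M)%N by apply: leq_ltn_trans hi; rewrite -ltnS.
have hij : (i - j < M)%N by apply: leq_ltn_trans hi; rewrite leq_subr.
by rewrite h1 // h2.
Qed.

Lemma eq_upto_sum M (I : finType) (F G : I -> {poly R}) :
  (forall i, eq_upto M (F i) (G i)) -> eq_upto M (\sum_i F i) (\sum_i G i).
Proof. by move=> h i hi; rewrite !coef_sum; apply: eq_bigr => j _; rewrite h. Qed.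

Lemma eq_upto_deriv M p q : eq_upto M.+1 p q -> eq_upto M p^`() q^`().
Proof. by move=> h i hi; rewrite !coef_deriv h. Qed.

Lemma coef_exp_lt_eq0 p m i : p`_0 = 0 -> (i < m)%N -> (p ^+ m)`_i = 0.
Proof.
move=> p0 lt_im; have : root p 0 by rewrite /root horner_coef0 p0.
case/factor_theorem => s ->; rewrite subr0 exprMn_comm ?coefMXn ?lt_im //.
exact: commr_polyX.
Qed.

End EqUpto.

Arguments eq_upto_sym {R M p q}.
Arguments eq_upto_trans {R M p q s}.
Arguments eq_uptoD {R M p1 p2 q1 q2}.
Arguments eq_uptoB {R M p1 p2 q1 q2}.
Arguments eq_uptoM {R M p1 p2 q1 q2}.

Section Truncation.
Context {R : realFieldType}.
Implicit Types a b : fps R.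

Definition trunc (M : nat) a : {poly R} := \poly_(i < M) a i.

Lemma coef_trunc M a i : (trunc M a)`_i = if (i < M)%N then a i else 0.
Proof. by rewrite coef_poly. Qed.

Lemma trunc_add M a b : trunc M (fps_add a b) = trunc M a + trunc M b.
Proof. by apply/polyP => i; rewrite coefD !coef_trunc; case: ifP; rewrite ?addr0. Qed.

Lemma trunc_opp M a : trunc M (fps_opp a) = - trunc M a.
Proof. by apply/polyP => i; rewrite coefN !coef_trunc; case: ifP; rewrite ?oppr0. Qed.

Lemma trunc_one M : (0 < M)%N -> trunc M (fps_one R) = 1.
Proof.
move=> M_gt0; apply/polyP => i; rewrite coef1 coef_trunc /fps_one.
by case: ltnP => // le_Mi; case: eqP => // i0; move: le_Mi; rewrite i0 leqNgt M_gt0.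
Qed.

Lemma trunc_t M : (1 < M)%N -> trunc M (fps_t R) = 'X.
Proof.
move=> M_gt1; apply/polyP => i; rewrite coefX coef_trunc /fps_t.
by case: ltnP => // le_Mi; case: eqP => // i1; move: le_Mi; rewrite i1 leqNgt M_gt1.
Qed.

Lemma trunc_mul M a b : eq_upto M (trunc M (fps_mul a b)) (trunc M a * trunc M b).
Proof.
move=> i hi; rewrite coef_trunc hi coefM; apply: eq_bigr => j _.
have hj : (j < M)%N by apply: leq_ltn_trans hi; rewrite -ltnS.
have hij : (i - j < M)%N by apply: leq_ltn_trans hi; rewrite leq_subr.
by rewrite !coef_trunc hj hij.
Qed.

Lemma trunc_pow M a m : (0 < M)%N -> eq_upto M (trunc M (fps_pow a m)) (trunc M a ^+ m).
Proof.
move=> M_gt0; elim: m => [|m ih] /=; first by rewrite trunc_one.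
by rewrite exprS; apply: eq_upto_trans (trunc_mul _ _ _) _; apply: eq_uptoM.
Qed.

Lemma trunc_comp M f g : (0 < M)%N -> g 0%N = 0 ->
  eq_upto M (trunc M (fps_comp f g)) (\sum_(m < M) f m *: trunc M g ^+ m).
Proof.
move=> M_gt0 g0 i hi; rewrite coef_trunc hi coef_sum /fps_comp.
rewrite (big_ord_widen M (fun m => f m * fps_pow g m i)) // big_mkcond /=.
apply: eq_bigr => m _; rewrite coefZ; case: ifP => hm.
  by rewrite -(trunc_pow M g m M_gt0 i hi) coef_trunc hi.
by rewrite coef_exp_lt_eq0 ?mulr0 ?coef_trunc ?M_gt0 // ltnNge -ltnS hm.
Qed.

End Truncation.

Section Scalars.
Context {R : numFieldType}.

Lemma natrS_neq0 (m : nat) : (m.+1)%:R != 0 :> R.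
Proof. by rewrite pnatr_eq0. Qed.

Lemma natr_fact_neq0 (m : nat) : (m`!)%:R != 0 :> R.
Proof. by rewrite pnatr_eq0 -lt0n fact_gt0. Qed.

Lemma gt0_addr_natr_neq0 (c : R) (m : nat) : 0 < c -> c + m%:R != 0.
Proof. by move=> c_gt0; rewrite gt_eqF // ltr_wpDr. Qed.

End Scalars.

Definition qcoef {R : realFieldType} (a : nat) : R := (-1) ^+ a.+1 / (a.+2)%:R.

Lemma Lif_ser_pred {R : realFieldType} k m :
  Lif_ser R (k - 1) m - Lif_ser R k m = Lif_ser R k m * m%:R.
Proof.
rewrite /Lif_ser expfzDr ?natrS_neq0 // exprN1.
have : (m.+1%:R : R) ^ k != 0 by apply: expfz_neq0; apply: natrS_neq0.
move: ((m.+1%:R : R) ^ k) => a a0.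
by field; rewrite a0 natr_fact_neq0 gt0_addr_natr_neq0 ?ltr01.
Qed.

Section GeneratingFunction.
Context {R : realFieldType}.
Variable M : nat.
Hypothesis M_gt1 : (1 < M)%N.

Let M_gt0 : (0 < M)%N. Proof. exact: ltnW. Qed.
Let M_pred : M = M.-1.+1. Proof. by rewrite prednK. Qed.

Definition logdiv := trunc M (@log1p_div_t R).
Definition logpoly := trunc M (@log1p_ser R).
Definition hpoly := trunc M (@h_ser R).
Definition hinv := (1 + 'X) * logdiv.
Definition qpoly := trunc M (@qcoef R).
Definition lifpoly k := trunc M (fps_comp (Lif_ser R k) (fps_opp (@log1p_ser R))).
Definition binpoly (x : R) := trunc M (binom_ser x).
Definition genpoly r k x := hpoly ^+ r * (lifpoly k * binpoly x).

Lemma hpoly_hinv : eq_upto M (hpoly * hinv) 1.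
Proof.
set P := fps_mul (fps_add (fps_one R) (fps_t R)) (@log1p_div_t R).
set g := fps_add P (fps_opp (fps_one R)).
have g0 : g 0%N = 0.
  rewrite /g /P /fps_add /fps_opp /fps_mul big_ord1 /fps_one /fps_t /log1p_div_t /=.
  by rewrite expr0 div1r invr1 addr0 mulr1 subrr.
set u := trunc M g.
have u_hinv : eq_upto M u (hinv - 1).
  rewrite /u /g trunc_add trunc_opp trunc_one //; apply: eq_uptoB => //.
  by apply: eq_upto_trans (trunc_mul _ _ _) _; rewrite trunc_add trunc_one // trunc_t.
(* h = 1/(1+u) is the geometric series in -u, which telescopes against 1+u *)
have h_geom : eq_upto M hpoly (\sum_(m < M) (- u) ^+ m).
  apply: eq_upto_trans (trunc_comp _ _ _ M_gt0 g0) _; apply: eq_upto_eq.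
  by apply: eq_bigr => m _; rewrite -scaleN1r exprZn.
have geom_tel : (\sum_(m < M) (- u) ^+ m) * (1 + u) = 1 - (- u) ^+ M.
  by rewrite -opprB subrX1; ring.
have : eq_upto M (hpoly * hinv) ((\sum_(m < M) (- u) ^+ m) * (1 + u)).
  apply: eq_uptoM => //; apply: eq_upto_sym.
  by apply: eq_upto_trans (eq_uptoD (eq_upto_refl _ 1) u_hinv) _; apply: eq_upto_eq; ring.
rewrite geom_tel => /eq_upto_trans; apply => i lt_iM.
by rewrite coefB coef_exp_lt_eq0 ?subr0 // coefN coef_trunc M_gt0 g0 oppr0.
Qed.

Lemma deriv_hinv : eq_upto M.-1 hinv^`() (- qpoly).
Proof.
move=> i lt_iM; have lt_i1M : (i.+1 < M)%N by rewrite -ltn_predRL.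
rewrite coefN coef_deriv /hinv mulrDl mul1r coefD coefXM /= /qpoly /logdiv.
rewrite !coef_trunc lt_i1M ltnW // /log1p_div_t /qcoef !exprS.
move: ((-1) ^+ i) => s.
by field; rewrite !gt0_addr_natr_neq0 ?ltr01 ?ltr0Sn.
Qed.

Lemma deriv_hpoly : eq_upto M.-1 hpoly^`() (hpoly ^+ 2 * qpoly).
Proof.
have h_hinv : eq_upto M.-1 (hpoly * hinv) 1 by apply: eq_upto_le hpoly_hinv; apply: leq_pred.
have dh_hinv : eq_upto M.-1 (hpoly^`() * hinv + hpoly * hinv^`()) 0.
  rewrite -derivM -(derivC 1) polyC1; apply: eq_upto_deriv.
  by rewrite -M_pred; apply: hpoly_hinv.
have : eq_upto M.-1 hpoly^`() (hpoly^`() * (hpoly * hinv)).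
  by rewrite -{1}[hpoly^`()]mulr1; apply: eq_uptoM => //; apply: eq_upto_sym.
move/eq_upto_trans; apply.
have -> : hpoly^`() * (hpoly * hinv)
    = hpoly * (hpoly^`() * hinv + hpoly * hinv^`()) - hpoly ^+ 2 * hinv^`() by ring.
apply: eq_upto_trans (eq_uptoB (eq_uptoM (eq_upto_refl _ hpoly) dh_hinv)
                                (eq_uptoM (eq_upto_refl _ (hpoly ^+ 2)) deriv_hinv)) _.
by apply: eq_upto_eq; ring.
Qed.

Lemma logpoly_X : eq_upto M logpoly ('X * logdiv).
Proof.
move=> [|i] lt_iM; rewrite coefXM /logpoly /logdiv !coef_trunc lt_iM //=.
by rewrite /log1p_ser /log1p_div_t ltnW // !exprS !mulN1r opprK.
Qed.

Lemma deriv_logpoly : eq_upto M.-1 ((1 + 'X) * logpoly^`()) 1.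
Proof.
move=> i lt_iM; have lt_i1M : (i.+1 < M)%N by rewrite -ltn_predRL.
rewrite mulrDl mul1r coefD coefXM coef1 coef_deriv /logpoly coef_trunc lt_i1M /log1p_ser.
case: i lt_iM lt_i1M => [|i] lt_iM lt_i1M /=; first by rewrite !exprS expr0; field.
rewrite coef_deriv coef_trunc ltnW //= !exprS; move: ((-1) ^+ i) => s.
by field; rewrite !gt0_addr_natr_neq0 ?ltr01 ?ltr0Sn.
Qed.

Lemma deriv_binpoly x : eq_upto M.-1 (binpoly x)^`() (x *: binpoly (x - 1)).
Proof.
move=> i lt_iM; have lt_i1M : (i.+1 < M)%N by rewrite -ltn_predRL.
rewrite coef_deriv coefZ !coef_trunc lt_i1M ltnW // /binom_ser big_ord_recl /= subr0.
have -> : \prod_(j < i) (x - (bump 0 j)%:R) = \prod_(j < i) (x - 1 - j%:R).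
  by apply: eq_bigr => j _; rewrite /bump /= add1n -addn1 natrD; ring.
move: (\prod_(j < i) _) => P; rewrite factS natrM.
by field; rewrite natr_fact_neq0 !gt0_addr_natr_neq0 ?ltr01.
Qed.

Definition lifsum k := \sum_(m < M) Lif_ser R k m *: (- logpoly) ^+ m.

Lemma lifpoly_sum k : eq_upto M (lifpoly k) (lifsum k).
Proof.
rewrite /lifpoly /lifsum /logpoly -trunc_opp.
by apply: trunc_comp => //; rewrite /fps_opp /log1p_ser oppr0.
Qed.

(* each term of the sum obeys y (Lif_k)' = Lif_(k-1) - Lif_k, with
   y = -log(1+t) and dy/dt = -1/(1+t) *)
Lemma deriv_lifsum k :
  eq_upto M.-1 ((1 + 'X) * logpoly * (lifsum k)^`()) (lifsum (k - 1) - lifsum k).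
Proof.
rewrite /lifsum -sumrB (big_morph _ (@derivD R) (@deriv0 R)) mulr_sumr.
apply: eq_upto_sum => -[[|m] lt_mM] /=.
  by rewrite derivZ deriv_exp mulr0n scaler0 mulr0 -scalerBl Lif_ser_pred mulr0 scale0r.
rewrite -scalerBl Lif_ser_pred derivZ -scalerAr -scalerA; apply: eq_uptoZ.
have -> : (1 + 'X) * logpoly * ((- logpoly) ^+ m.+1)^`()
    = ((- logpoly) ^+ m.+1 * ((1 + 'X) * logpoly^`())) *+ m.+1.
  by rewrite deriv_exp derivN exprS; ring.
rewrite scaler_nat; apply: eq_uptoMn.
by rewrite -{2}[(- logpoly) ^+ m.+1]mulr1; apply: eq_uptoM => //; apply: deriv_logpoly.
Qed.

Lemma deriv_lifpoly k :
  eq_upto M.-1 ('X * (lifpoly k)^`()) (hpoly * (lifpoly (k - 1) - lifpoly k)).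
Proof.
have h_hinv : eq_upto M.-1 (hpoly * hinv) 1 by apply: eq_upto_le hpoly_hinv; apply: leq_pred.
have X_logdiv : eq_upto M.-1 ('X * logdiv) logpoly.
  by apply: eq_upto_le (eq_upto_sym logpoly_X); apply: leq_pred.
have dlif : eq_upto M.-1 (lifpoly k)^`() (lifsum k)^`().
  by apply: eq_upto_deriv; rewrite -M_pred; apply: lifpoly_sum.
have lif_le k' : eq_upto M.-1 (lifsum k') (lifpoly k').
  by apply: eq_upto_le (eq_upto_sym (lifpoly_sum k')); apply: leq_pred.
apply: eq_upto_trans (_ : eq_upto _ _ ('X * (lifpoly k)^`() * (hpoly * hinv))) _.
  by rewrite -{1}['X * _]mulr1; apply: eq_uptoM => //; apply: eq_upto_sym.
have -> : 'X * (lifpoly k)^`() * (hpoly * hinv)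
    = hpoly * ((1 + 'X) * ('X * logdiv) * (lifpoly k)^`()) by rewrite /hinv; ring.
apply: eq_uptoM => //; apply: eq_upto_trans (eq_uptoB (lif_le _) (lif_le _)).
apply: eq_upto_trans (deriv_lifsum k).
by apply: eq_uptoM => //; apply: eq_uptoM.
Qed.

Lemma coef_genpoly m r k x : (m < M)%N -> (genpoly r k x)`_m = Atilde_gen r k x m.
Proof.
move=> lt_mM; have := coef_trunc M (Atilde_gen r k x) m; rewrite lt_mM => <-.
symmetry; apply: (eq_upto_trans (trunc_mul _ _ _) _ m lt_mM).
by apply: eq_uptoM; [apply: trunc_pow | apply: trunc_mul].
Qed.

Lemma deriv_genpoly s k x :
  eq_upto M.-1 ('X * (genpoly s.+1 k x)^`())
    (x%:P * ('X * genpoly s.+1 k (x - 1)) + ('X * qpoly * genpoly s.+2 k x) *+ s.+1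
     + (genpoly s.+2 (k - 1) x - genpoly s.+2 k x)).
Proof.
have -> : 'X * (genpoly s.+1 k x)^`() =
    ('X * hpoly^`() * hpoly ^+ s * lifpoly k * binpoly x) *+ s.+1
    + hpoly ^+ s.+1 * ('X * (lifpoly k)^`()) * binpoly x
    + 'X * hpoly ^+ s.+1 * lifpoly k * (binpoly x)^`().
  by rewrite /genpoly !derivM deriv_exp /=; ring.
apply: eq_upto_trans (_ : eq_upto _ _
    (('X * (hpoly ^+ 2 * qpoly) * hpoly ^+ s * lifpoly k * binpoly x) *+ s.+1
     + hpoly ^+ s.+1 * (hpoly * (lifpoly (k - 1) - lifpoly k)) * binpoly x
     + 'X * hpoly ^+ s.+1 * lifpoly k * (x *: binpoly (x - 1)))) _.
  apply: eq_uptoD; first apply: eq_uptoD.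
  - by apply: eq_uptoMn; do 3 apply: eq_uptoM => //; apply: eq_uptoM => //; apply: deriv_hpoly.
  - by apply: eq_uptoM => //; apply: eq_uptoM => //; apply: deriv_lifpoly.
  - by apply: eq_uptoM => //; apply: deriv_binpoly.
by apply: eq_upto_eq; rewrite /genpoly -mul_polyC !exprS; ring.
Qed.

End GeneratingFunction.

Lemma Atilde_gen_rec {R : realFieldType} n s k (x : R) :
  n.+1%:R * Atilde_gen s.+1 k x n.+1 =
    x * Atilde_gen s.+1 k (x - 1) n
    + s.+1%:R * \sum_(j < n.+1) qcoef j * Atilde_gen s.+2 k x (n - j)%N
    + (Atilde_gen s.+2 (k - 1) x n.+1 - Atilde_gen s.+2 k x n.+1).
Proof.
have M_gt1 : (1 < n.+3)%N by [].
have lt_n_M : (n < n.+3)%N by rewrite ltnS !leqW.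
have := deriv_genpoly _ M_gt1 s k x n.+1 (ltnSn n.+1).
rewrite !coefD coefN coefCM coefMn -mulrA !coefXM /= coef_deriv (coefM (qpoly _)).
rewrite !coef_genpoly // !mulr_natl => ->; congr (_ + _ *+ _ + _).
apply: eq_bigr => -[j /=]; rewrite ltnS => le_jn _.
rewrite coef_trunc coef_genpoly /= ?(leq_ltn_trans le_jn lt_n_M) //.
exact: leq_ltn_trans (leq_subr j n) lt_n_M.
Qed.

Lemma qcoef_binomial {R : realFieldType} n a : (a <= n)%N ->
  (-1) ^+ a.+1 * a`!%:R / (a.+2)%:R * 'C(n, a)%:R * (n - a)`!%:R = n`!%:R * qcoef a :> R.
Proof.
move=> le_an; rewrite /qcoef -(bin_fact le_an) !natrM.
by field; rewrite gt0_addr_natr_neq0 ?ltr0Sn.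
Qed.

Theorem theorem5 (R : realFieldType) (n r : nat) (k : int) (x : R)
  (hn : (1 <= n)%N) (hr : (1 <= r)%N) :
  Atilde n r k x =
    x * Atilde n.-1 r k (x - 1)
    + r%:R * \sum_(a < n)
        ((-1) ^+ a.+1 * a`!%:R / (a.+2)%:R * 'C(n.-1, a)%:R
          * Atilde (n.-1 - a)%N r.+1 k x)
    + n%:R^-1 * (Atilde n r.+1 (k - 1) x - Atilde n r.+1 k x).
Proof.
case: n hn => [//|n] _; case: r hr => [//|s] _ /=; rewrite /Atilde.
have -> : \sum_(a < n.+1) ((-1) ^+ a.+1 * a`!%:R / a.+2%:R * 'C(n, a)%:R
            * ((n - a)`!%:R * Atilde_gen s.+2 k x (n - a)%N))
        = n`!%:R * \sum_(a < n.+1) qcoef a * Atilde_gen s.+2 k x (n - a)%N.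
  rewrite mulr_sumr; apply: eq_bigr => -[a lt_an] _ /=.
  by rewrite mulrA -qcoef_binomial // mulrA.
rewrite factS natrM [n.+1%:R * _]mulrC -mulrA Atilde_gen_rec.
by field; rewrite gt0_addr_natr_neq0 ?ltr01.
Qed.
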